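(* For a positive integer $c$ let $m_c=\frac{(2c)!}{2^c\,c!}\cdot 2c$, and for a positive integer $n$ let $C_n=\frac{1}{n+1}\binom{2n}{n}$ be the $n$th Catalan number. Then for all sufficiently large $n$ and every positive integer $c$ with $c+2\le \frac{\ln n}{4\ln\ln n}$, one has $m_c^{2n}\,C_n^{\,c} < (2n-1)!! = \frac{(2n)!}{n!\,2^n}$.
   Context: Here $\ln$ denotes the natural logarithm and $(2n-1)!!=1\cdot 3\cdot 5\cdots(2n-1)$. *)

From Stdlib Require Import Arith Reals.
Open Scope R_scope.

Definition m_c (c : nat) : R :=
  INR (fact (2 * c)) / (2 ^ c * INR (fact c)) * (2 * INR c).

Definition catalan (n : nat) : R := / (INR n + 1) * Binomial.C (2 * n) n.

Definition dfact_odd (n : nat) : R := INR (fact (2 * n)) / (INR (fact n) * 2 ^ n).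

(* Crude bounds suffice: (2c)!/(2^c c!) <= (2c)^c gives m_c <= (2c)^(c+1), C_n <= 4^n, and
   (2n)!/n! >= n^n gives (2n-1)!! >= (n/2)^n, so it is enough that (2c)^(2c+2) 4^c < n/2.
   With L = ln n, the hypothesis says (4c+8) ln L <= L, i.e. L^(4c+8) <= n, and also forces
   2c <= L, which bounds (2c)^(2c+2) 4^c by L^(4c+3).  Taking n >= 27 ensures ln L >= 1. *)

From Stdlib Require Import Arith Reals Lra Lia.
Open Scope R_scope.

Lemma fact_add_le_mul_pow a b : (fact (a + b) <= fact a * (a + b) ^ b)%nat.
Proof.
  induction b as [|b IH]; [rewrite Nat.add_0_r, Nat.pow_0_r; lia|].
  replace (a + S b)%nat with (S (a + b)) by lia.
  rewrite fact_simpl, Nat.pow_succ_r'.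
  assert (Hpow : ((a + b) ^ b <= S (a + b) ^ b)%nat) by (apply Nat.pow_le_mono_l; lia).
  apply (Nat.mul_le_mono_l _ _ (S (a + b))) in IH.
  apply (Nat.mul_le_mono_l _ _ (S (a + b) * fact a)) in Hpow.
  lia.
Qed.

Lemma fact_mul_pow_le_fact_add a b : (fact a * a ^ b <= fact (a + b))%nat.
Proof.
  induction b as [|b IH]; [rewrite Nat.add_0_r, Nat.pow_0_r; lia|].
  replace (a + S b)%nat with (S (a + b)) by lia.
  rewrite fact_simpl, Nat.pow_succ_r'.
  apply (Nat.mul_le_mono_l _ _ a) in IH.
  assert (a * fact (a + b) <= S (a + b) * fact (a + b))%nat
    by (apply Nat.mul_le_mono_r; lia).
  lia.
Qed.

Lemma fact_double_le n : (fact (2 * n) <= 4 ^ n * (fact n * fact n))%nat.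
Proof.
  induction n as [|n IH]; [simpl; lia|].
  replace (2 * S n)%nat with (S (S (2 * n))) by lia.
  rewrite !fact_simpl, Nat.pow_succ_r'.
  assert (Hstep : (S (S (2 * n)) * S (2 * n) <= 4 * (S n * S n))%nat) by nia.
  apply (Nat.mul_le_mono_l _ _ (S (S (2 * n)) * S (2 * n))) in IH.
  apply (Nat.mul_le_mono_r _ _ (4 ^ n * (fact n * fact n))) in Hstep.
  lia.
Qed.

Lemma Rdiv_le_of_le_mul a b c : 0 < b -> a <= c * b -> a / b <= c.
Proof.
  intros Hb H. apply (Rmult_le_reg_r b); [exact Hb|].
  now replace (a / b * b) with a by (field; lra).
Qed.

Lemma Rle_div_of_mul_le a b c : 0 < b -> c * b <= a -> c <= a / b.
Proof.
  intros Hb H. apply (Rmult_le_reg_r b); [exact Hb|].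
  now replace (a / b * b) with a by (field; lra).
Qed.

Lemma Rpow_lt_compat_l x y n : 0 <= x -> x < y -> (0 < n)%nat -> x ^ n < y ^ n.
Proof.
  intros Hx Hxy Hn. destruct n as [|n]; [lia|]. clear Hn.
  induction n as [|n IH]; [simpl; lra|].
  rewrite <- (tech_pow_Rmult x (S n)), <- (tech_pow_Rmult y (S n)).
  assert (0 <= x ^ S n) by (apply pow_le; exact Hx).
  nra.
Qed.

Lemma INR_fact_pos k : 0 < INR (fact k).
Proof. apply lt_0_INR, lt_O_fact. Qed.

Lemma m_c_ge0 c : 0 <= m_c c.
Proof.
  unfold m_c. pose proof (INR_fact_pos c). pose proof (INR_fact_pos (2 * c)).
  apply Rmult_le_pos; [|pose proof (pos_INR c); lra].
  apply Rle_mult_inv_pos; [lra | apply Rmult_lt_0_compat; [apply pow_lt|]; lra].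
Qed.

Lemma m_c_le c : m_c c <= (2 * INR c) ^ S c.
Proof.
  unfold m_c. pose proof (INR_fact_pos c). pose proof (pos_INR c).
  assert (1 <= 2 ^ c) by (apply pow_R1_Rle; lra).
  assert (Hfact : INR (fact (2 * c)) <= INR (fact c) * (2 * INR c) ^ c).
  { pose proof (le_INR _ _ (fact_add_le_mul_pow c c)) as Hle.
    replace (c + c)%nat with (2 * c)%nat in Hle by lia.
    rewrite mult_INR, pow_INR, mult_INR in Hle. now replace (INR 2) with 2 in Hle by (simpl; ring). }
  assert (0 <= INR (fact c) * (2 * INR c) ^ c) by (apply Rmult_le_pos; [lra | apply pow_le; lra]).
  rewrite <- tech_pow_Rmult, Rmult_comm.
  apply Rmult_le_compat_l; [lra|].
  apply Rdiv_le_of_le_mul; [apply Rmult_lt_0_compat; lra|nra].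
Qed.

Lemma catalan_ge0 n : 0 <= catalan n.
Proof.
  unfold catalan, Binomial.C. pose proof (pos_INR n).
  apply Rmult_le_pos; [apply Rlt_le, Rinv_0_lt_compat; lra|].
  apply Rle_mult_inv_pos; [apply pos_INR|].
  apply Rmult_lt_0_compat; apply INR_fact_pos.
Qed.

Lemma catalan_le n : catalan n <= 4 ^ n.
Proof.
  unfold catalan, Binomial.C. replace (2 * n - n)%nat with n by lia.
  pose proof (INR_fact_pos n). pose proof (pos_INR n).
  assert (Hbinom : INR (fact (2 * n)) / (INR (fact n) * INR (fact n)) <= 4 ^ n).
  { apply Rdiv_le_of_le_mul; [apply Rmult_lt_0_compat; lra|].
    pose proof (le_INR _ _ (fact_double_le n)) as Hle.
    rewrite !mult_INR, pow_INR in Hle. now replace (INR 4) with 4 in Hle by (simpl; ring). }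
  assert (0 <= INR (fact (2 * n)) / (INR (fact n) * INR (fact n))).
  { apply Rle_mult_inv_pos; [apply pos_INR | apply Rmult_lt_0_compat; lra]. }
  assert (/ (INR n + 1) <= 1) by (rewrite <- Rinv_1; apply Rinv_le_contravar; lra).
  assert (0 < / (INR n + 1)) by (apply Rinv_0_lt_compat; lra).
  nra.
Qed.

Lemma dfact_odd_ge n : (INR n / 2) ^ n <= dfact_odd n.
Proof.
  unfold dfact_odd. pose proof (INR_fact_pos n).
  apply Rle_div_of_mul_le; [apply Rmult_lt_0_compat; [lra | apply pow_lt; lra]|].
  pose proof (le_INR _ _ (fact_mul_pow_le_fact_add n n)) as Hle.
  replace (n + n)%nat with (2 * n)%nat in Hle by lia. rewrite mult_INR, pow_INR in Hle.
  replace ((INR n / 2) ^ n * (INR (fact n) * 2 ^ n)) with (INR (fact n) * (INR n / 2 * 2) ^ n)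
    by (rewrite Rpow_mult_distr; ring).
  now replace (INR n / 2 * 2) with (INR n) by field.
Qed.

Definition growth_base (c : nat) : R := (2 * INR c) ^ (2 * c + 2) * 4 ^ c.

Lemma growth_base_ge0 c : 0 <= growth_base c.
Proof. unfold growth_base. pose proof (pos_INR c). apply Rmult_le_pos; apply pow_le; lra. Qed.

Lemma m_c_pow_catalan_pow_le c n : m_c c ^ (2 * n) * catalan n ^ c <= growth_base c ^ n.
Proof.
  pose proof (m_c_ge0 c). pose proof (catalan_ge0 n).
  replace (growth_base c ^ n) with (((2 * INR c) ^ S c) ^ (2 * n) * (4 ^ n) ^ c).
  - apply Rmult_le_compat; try (apply pow_le; assumption); apply pow_incr.
    + split; [assumption | apply m_c_le].
    + split; [assumption | apply catalan_le].
  - unfold growth_base. rewrite (Rpow_mult_distr ((2 * INR c) ^ (2 * c + 2))), <- !pow_mult.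
    f_equal; f_equal; lia.
Qed.

Lemma le_ln_of_exp_le a y : 0 < y -> exp a <= y -> a <= ln y.
Proof.
  intros Hy H. apply Rnot_lt_le. intro Hlt.
  apply exp_increasing in Hlt. rewrite exp_ln in Hlt; lra.
Qed.

Lemma pow_le_of_mul_ln_le y x k : 0 < y -> 0 < x -> INR k * ln y <= ln x -> y ^ k <= x.
Proof.
  intros Hy Hx H. apply Rnot_lt_le. intro Hlt.
  apply ln_increasing in Hlt; [|exact Hx].
  rewrite ln_pow in Hlt; lra.
Qed.

Lemma growth_base_lt_pow L c : 2 <= L -> 2 * INR c <= L -> 2 * growth_base c < L ^ (4 * c + 8).
Proof.
  intros HL Hc. unfold growth_base. pose proof (pos_INR c).
  assert ((2 * INR c) ^ (2 * c + 2) <= L ^ (2 * c + 2)) by (apply pow_incr; lra).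
  assert (4 ^ c <= L ^ (2 * c)) by (rewrite pow_mult; apply pow_incr; nra).
  assert (0 <= (2 * INR c) ^ (2 * c + 2)) by (apply pow_le; lra).
  assert (0 <= 4 ^ c) by (apply pow_le; lra).
  assert (2 * ((2 * INR c) ^ (2 * c + 2) * 4 ^ c) <= L ^ (4 * c + 3)).
  { replace (4 * c + 3)%nat with (S ((2 * c + 2) + 2 * c)) by lia.
    rewrite <- tech_pow_Rmult, (pow_add L).
    apply Rmult_le_compat; [lra | apply Rmult_le_pos; lra | lra |].
    apply Rmult_le_compat; lra. }
  assert (L ^ (4 * c + 3) < L ^ (4 * c + 8)) by (apply Rlt_pow; [lra | lia]).
  lra.
Qed.

Theorem mainTheorem3 :
  exists N : nat, forall n : nat, (N <= n)%nat ->
    forall c : nat, (1 <= c)%nat ->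
      INR c + 2 <= ln (INR n) / (4 * ln (ln (INR n))) ->
      (m_c c) ^ (2 * n) * (catalan n) ^ c < dfact_odd n.
Proof.
  exists 27%nat. intros n Hn c _ Hc.
  assert (Hn27 : 27 <= INR n) by (apply le_INR in Hn; simpl in Hn; lra).
  pose proof exp_le_3 as He.
  assert (HL : 3 <= ln (INR n)).
  { apply le_ln_of_exp_le; [lra|].
    replace 3 with (1 + 1 + 1) by ring. rewrite !exp_plus.
    pose proof (exp_pos 1). nra. }
  assert (HlL : 1 <= ln (ln (INR n))) by (apply le_ln_of_exp_le; lra).
  set (L := ln (INR n)) in *.
  assert (Hk : (4 * INR c + 8) * ln L <= L).
  { apply (Rmult_le_compat_r (4 * ln L)) in Hc; [|lra].
    replace (L / (4 * ln L) * (4 * ln L)) with L in Hc by (field; lra). nra. }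
  assert (HnL : L ^ (4 * c + 8) <= INR n).
  { apply pow_le_of_mul_ln_le; [lra | lra |].
    now replace (INR (4 * c + 8)) with (4 * INR c + 8) by (rewrite plus_INR, mult_INR; simpl; ring). }
  pose proof (growth_base_lt_pow L c ltac:(nra) ltac:(nra)) as Hbase.
  apply (Rle_lt_trans _ _ _ (m_c_pow_catalan_pow_le c n)).
  apply (Rlt_le_trans _ ((INR n / 2) ^ n)); [|apply dfact_odd_ge].
  apply Rpow_lt_compat_l; [apply growth_base_ge0 | lra | lia].
Qed.
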